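(* Let $u=u(x,t)$ and $w=w(x,t)$ be smooth functions and let $\lambda\neq 0$ be a constant (spectral parameter). Define the $3\times 3$ matrices \[ A=\begin{pmatrix} 0 & -2 & 0 \\ -u & 0 & -2 \\ \frac{1}{72}\frac{w}{\lambda} + \lambda & -u & 0 \end{pmatrix}, \] \[ B=\begin{pmatrix} 2 u_{xxx} - 32 u u_x + 24 \lambda u & 4 u_{xx} - 32 u^2 & -144 \lambda \\ -u_{xxxx} + 18 u u_{xx} + 16 u_x^2 - 12 \lambda u_x - 16 u^3 + 72 \lambda^2 + w & -48 \lambda u & 4 u_{xx} - 32 u^2 \\ 4\lambda u_{xx} - 20 \lambda u^2-\frac{w (u_{xx} - 8 u^2)}{36\lambda} & b_{32} & -2 u_{xxx} + 32 u u_x + 24 \lambda u \end{pmatrix}, \] where $b_{32}=-u_{xxxx} + 18 u u_{xx} + 16 u_x^2 + 12 \lambda u_x - 16 u^3 + 72 \lambda^2+w$. Then the zero curvature equation \[ A_t-B_x+[A,B]=0,\qquad [A,B]=AB-BA, \] holds (for all $\lambda\neq 0$) if and only if $u,w$ satisfy the system \[ \begin{aligned} u_t &= u_{xxxxx}-20 u u_{xxx} -50 u_x u_{xx}+80 u^2 u_x-w_x,\\ w_t &= -6 w u_{xxx}-2 u_{xx} w_x+96 w u u_x+16 w_x u^2 . \end{aligned} \]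
   Context: Subscripts denote partial derivatives, e.g. $u_{xxx}=\partial^3 u/\partial x^3$, $A_t=\partial A/\partial t$, $B_x=\partial B/\partial x$ (entrywise). *)

From Stdlib Require Import Reals List.
From Coquelicot Require Import Coquelicot.
From mathcomp Require Import all_boot all_algebra.
From mathcomp Require Import Rstruct.

Set Implicit Arguments.
Unset Strict Implicit.
Unset Printing Implicit Defensive.

Definition fun2 := R -> R -> R.

Definition pDx (f : fun2) : fun2 := fun x t => Derive (fun y => f y t) x.
Definition pDt (f : fun2) : fun2 := fun x t => Derive (fun s => f x s) t.

Fixpoint iterD (l : list bool) (f : fun2) : fun2 :=
  match l with
  | nil => f
  | b :: l' => if b then pDt (iterD l' f) else pDx (iterD l' f)
  end.

Definition smooth2 (f : fun2) : Prop :=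
  forall (l : list bool) (x t : R),
    ex_derive (fun y => iterD l f y t) x /\
    ex_derive (fun s => iterD l f x s) t /\
    continuous (fun p : R * R => iterD l f (fst p) (snd p)) (x, t).

Definition mx3 (a11 a12 a13 a21 a22 a23 a31 a32 a33 : R) : 'M[R]_3 :=
  \matrix_(i < 3, j < 3)
    nth 0%R (nth nil ((a11 :: a12 :: a13 :: nil) :: (a21 :: a22 :: a23 :: nil)
                       :: (a31 :: a32 :: a33 :: nil) :: nil) i) j.

Definition mxDx (M : R -> R -> 'M[R]_3) (x t : R) : 'M[R]_3 :=
  \matrix_(i < 3, j < 3) Derive (fun y => M y t i j) x.
Definition mxDt (M : R -> R -> 'M[R]_3) (x t : R) : 'M[R]_3 :=
  \matrix_(i < 3, j < 3) Derive (fun s => M x s i j) t.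

Local Open Scope R_scope.

Definition LaxA (lam : R) (u w : fun2) (x t : R) : 'M[R]_3 :=
  let u0 := u x t in let w0 := w x t in
  mx3 0 (-2) 0
      (- u0) 0 (-2)
      ((1/72) * (w0 / lam) + lam) (- u0) 0.

Definition LaxB (lam : R) (u w : fun2) (x t : R) : 'M[R]_3 :=
  let u0 := u x t in let w0 := w x t in
  let ux := pDx u x t in let uxx := pDx (pDx u) x t in
  let uxxx := pDx (pDx (pDx u)) x t in let uxxxx := pDx (pDx (pDx (pDx u))) x t in
  let b32 := - uxxxx + 18 * u0 * uxx + 16 * ux ^ 2 + 12 * lam * ux
             - 16 * u0 ^ 3 + 72 * lam ^ 2 + w0 in
  mx3 (2 * uxxx - 32 * u0 * ux + 24 * lam * u0)
      (4 * uxx - 32 * u0 ^ 2)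
      (-144 * lam)
      (- uxxxx + 18 * u0 * uxx + 16 * ux ^ 2 - 12 * lam * ux
         - 16 * u0 ^ 3 + 72 * lam ^ 2 + w0)
      (-48 * lam * u0)
      (4 * uxx - 32 * u0 ^ 2)
      (4 * lam * uxx - 20 * lam * u0 ^ 2 - w0 * (uxx - 8 * u0 ^ 2) / (36 * lam))
      b32
      (-2 * uxxx + 32 * u0 * ux + 24 * lam * u0).

Local Close Scope R_scope.
Local Open Scope ring_scope.

Definition zero_curvature_lhs (lam : R) (u w : fun2) (x t : R) : 'M[R]_3 :=
  let A := LaxA lam u w in let B := LaxB lam u w in
  mxDt A x t - mxDx B x t + (A x t *m B x t - B x t *m A x t).

Definition zero_curvature (lam : R) (u w : fun2) (x t : R) : Prop :=
  zero_curvature_lhs lam u w x t = 0.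

From Pilot Require Import Defs.
From Stdlib Require Import Reals List Lra.
From Coquelicot Require Import Coquelicot.
From mathcomp Require Import all_boot all_algebra.
From mathcomp Require Import Rstruct.
Local Open Scope R_scope.

(* Computed entrywise, A_t - B_x + [A,B] vanishes except in three entries:
   the (2,1) and (3,2) entries equal u_flow - u_t and the (3,1) entry equals
   (w_t - w_flow) / (72 lam).  So for each fixed lam <> 0 the zero curvature
   equation is equivalent to the flow, and lam = 1 already forces the flow. *)

Definition u_flow (u w : fun2) (x t : R) : R :=
  pDx (pDx (pDx (pDx (pDx u)))) x t
  - 20 * u x t * pDx (pDx (pDx u)) x t
  - 50 * pDx u x t * pDx (pDx u) x t
  + 80 * u x t ^ 2 * pDx u x t
  - pDx w x t.

Definition w_flow (u w : fun2) (x t : R) : R :=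
  - 6 * w x t * pDx (pDx (pDx u)) x t
  - 2 * pDx (pDx u) x t * pDx w x t
  + 96 * w x t * u x t * pDx u x t
  + 16 * pDx w x t * u x t ^ 2.

Lemma smooth2_ex_derive_x (f : fun2) (n : nat) (x t : R) :
  smooth2 f -> ex_derive (fun y => Defs.iterD (nseq n false) f y t) x.
Proof. by move=> sf; case: (sf (nseq n false) x t). Qed.

Lemma smooth2_ex_derive_t (f : fun2) (x t : R) :
  smooth2 f -> ex_derive (fun s => f x s) t.
Proof. by move=> sf; case: (sf nil x t) => _ []. Qed.

Lemma mx3E a11 a12 a13 a21 a22 a23 a31 a32 a33 (i j : 'I_3) :
  mx3 a11 a12 a13 a21 a22 a23 a31 a32 a33 i j =
    nth 0%R (nth nil ((a11 :: a12 :: a13 :: nil) :: (a21 :: a22 :: a23 :: nil)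
                       :: (a31 :: a32 :: a33 :: nil) :: nil) i) j.
Proof. by rewrite mxE. Qed.

Lemma mx3_eq0 (a b : R) : mx3 0 0 0 a 0 0 b a 0 = 0%R <-> a = 0 /\ b = 0.
Proof.
split=> [zero_mx | [-> ->]].
- have a0 := congr1 (fun M : 'M[R]_3 => M (inord 1) (inord 0)) zero_mx.
  have b0 := congr1 (fun M : 'M[R]_3 => M (inord 2) (inord 0)) zero_mx.
  by move: a0 b0; rewrite /= !mx3E !mxE !inordK.
- apply/matrixP => i j; rewrite mx3E mxE.
  by case: i => [[|[|[|i]]] Hi] //; case: j => [[|[|[|j]]] Hj].
Qed.

Section ZeroCurvature.
Variables (u w : fun2) (lam x t : R).
Hypotheses (su : smooth2 u) (sw : smooth2 w) (lam_neq0 : lam <> 0).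

Let u0 := u x t.
Let u1 := pDx u x t.
Let u2 := pDx (pDx u) x t.
Let u3 := pDx (pDx (pDx u)) x t.
Let u4 := pDx (pDx (pDx (pDx u))) x t.
Let u5 := pDx (pDx (pDx (pDx (pDx u)))) x t.
Let w0 := w x t.
Let w1 := pDx w x t.

Lemma LaxA_t : mxDt (LaxA lam u w) x t =
  mx3 0 0 0 (- pDt u x t) 0 0 (pDt w x t / (72 * lam)) (- pDt u x t) 0.
Proof.
have du := smooth2_ex_derive_t u x t su; have dw := smooth2_ex_derive_t w x t sw.
apply/matrixP => i j; rewrite !mxE.
under Derive_ext => s do rewrite /LaxA mx3E.
case: i => [[|[|[|i]]] Hi] //; case: j => [[|[|[|j]]] Hj] //=;
  apply: is_derive_unique; auto_derive; rewrite ?/pDt; by [| field].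
Qed.

Lemma LaxB_x : mxDx (LaxB lam u w) x t =
  mx3 (2 * u4 - 32 * (u1 ^ 2 + u0 * u2) + 24 * lam * u1)
      (4 * u3 - 64 * u0 * u1)
      0
      (- u5 + 18 * (u1 * u2 + u0 * u3) + 32 * u1 * u2 - 12 * lam * u2
         - 48 * u0 ^ 2 * u1 + w1)
      (-48 * lam * u1)
      (4 * u3 - 64 * u0 * u1)
      (4 * lam * u3 - 40 * lam * u0 * u1
         - (w1 * (u2 - 8 * u0 ^ 2) + w0 * (u3 - 16 * u0 * u1)) / (36 * lam))
      (- u5 + 18 * (u1 * u2 + u0 * u3) + 32 * u1 * u2 + 12 * lam * u2
         - 48 * u0 ^ 2 * u1 + w1)
      (-2 * u4 + 32 * (u1 ^ 2 + u0 * u2) + 24 * lam * u1).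
Proof.
have d0 := smooth2_ex_derive_x u 0 x t su; have d1 := smooth2_ex_derive_x u 1 x t su.
have d2 := smooth2_ex_derive_x u 2 x t su; have d3 := smooth2_ex_derive_x u 3 x t su.
have d4 := smooth2_ex_derive_x u 4 x t su; have dw := smooth2_ex_derive_x w 0 x t sw.
apply/matrixP => i j; rewrite !mxE.
under Derive_ext => s do rewrite /LaxB mx3E.
case: i => [[|[|[|i]]] Hi] //; case: j => [[|[|[|j]]] Hj] //=;
  apply: is_derive_unique; auto_derive; try (repeat split; assumption).
all: by rewrite /u0 /u1 /u2 /u3 /u4 /u5 /w0 /w1 /pDx; field.
Qed.

Lemma zero_curvature_lhsE : zero_curvature_lhs lam u w x t =
  mx3 0 0 0
      (u_flow u w x t - pDt u x t) 0 0
      ((pDt w x t - w_flow u w x t) / (72 * lam)) (u_flow u w x t - pDt u x t) 0.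
Proof.
rewrite /zero_curvature_lhs LaxA_t LaxB_x.
apply/matrixP => i j; rewrite !mxE !big_ord_recr !big_ord0 /= !mxE /LaxA /LaxB ?mx3E.
case: i => [[|[|[|i]]] Hi] //; case: j => [[|[|[|j]]] Hj] //=;
  rewrite -?RplusE -?RmultE -?RoppE -?R0E.
all: by rewrite /u_flow /w_flow /u0 /u1 /u2 /u3 /u4 /u5 /w0 /w1; field.
Qed.

Lemma zero_curvatureP : zero_curvature lam u w x t <->
  pDt u x t = u_flow u w x t /\ pDt w x t = w_flow u w x t.
Proof.
rewrite /zero_curvature zero_curvature_lhsE mx3_eq0.
have lam72_neq0 : 72 * lam <> 0 by lra.
split=> [[du dw] | [-> ->]].
- split; first by lra.
  suff : pDt w x t - w_flow u w x t = 0 by lra.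
  by rewrite -(Rmult_0_l (72 * lam)) -dw; field.
- by split; [ring | rewrite Rminus_diag; field].
Qed.

End ZeroCurvature.

Theorem mainTheorem1 (u w : R -> R -> R) :
  smooth2 u -> smooth2 w ->
  ((forall lam : R, lam <> 0 -> forall x t : R,
       zero_curvature lam u w x t) <->
   (forall x t : R,
       (pDt u x t = pDx (pDx (pDx (pDx (pDx u)))) x t
                   - 20 * u x t * pDx (pDx (pDx u)) x t
                   - 50 * pDx u x t * pDx (pDx u) x t
                   + 80 * u x t ^ 2 * pDx u x t
                   - pDx w x t) /\
       (pDt w x t = - 6 * w x t * pDx (pDx (pDx u)) x t
                   - 2 * pDx (pDx u) x t * pDx w x t
                   + 96 * w x t * u x t * pDx u x t
                   + 16 * pDx w x t * u x t ^ 2))).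
Proof.
move=> su sw; split=> [zc x t | flow lam lam_neq0 x t].
- have one_neq0 : 1 <> 0 by lra.
  exact/(zero_curvatureP _ _ _ _ _ su sw one_neq0)/zc.
- exact/(zero_curvatureP _ _ _ _ _ su sw lam_neq0)/flow.
Qed.
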